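(* Let $\nu>0$, $L>0$, $T>0$, and let $u(x,t)$ and $f(x,t)$ be smooth vector fields on $\mathbb{R}^3\times[0,T]$, periodic of period $L$ in each coordinate direction ($u$ need not be divergence-free). Let $\Gamma=\partial_t+u\cdot\nabla-\nu\Delta$, acting componentwise. Let $\ell$ be a smooth $L$-periodic vector field solving $$(\partial_t+u\cdot\nabla-\nu\Delta)\ell+u=0,$$ put $A=x+\ell$, let $(\nabla A)_{mj}=\partial_jA^m$, assume $\nabla A$ is invertible everywhere, let $Q=(\nabla A)^{-1}$ and $C_{m,k;i}=Q_{ji}\partial_j\partial_kA^m$. Let $v$ be a smooth $L$-periodic vector field solving $$\Gamma v_i=2\nu\, C_{m,k;i}\,\partial_k v_m+Q_{ji}f_j,\qquad i=1,2,3.$$ Define $w_i=(\partial_iA^m)v_m$. Then $$\Gamma w+(\nabla u)^*w=f,$$ i.e. $\Gamma w_i+(\partial_i u_j)w_j=f_i$ for $i=1,2,3$.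
   Context: Repeated indices are summed over $\{1,2,3\}$. $(\nabla u)^*$ denotes the transpose of the matrix $(\nabla u)_{jk}=\partial_k u_j$. *)

From HB Require Import structures.
From mathcomp Require Import all_boot all_order all_algebra.
From mathcomp Require Import all_classical all_reals all_analysis.
Set Implicit Arguments. Unset Strict Implicit. Unset Printing Implicit Defensive.
Import Order.TTheory GRing.Theory Num.Theory.
Import numFieldNormedType.Exports.
Local Open Scope ring_scope.

Definition sfield (R : realType) := 'rV[R]_3 -> R -> R.
Definition vfield (R : realType) := 'I_3 -> sfield R.

Definition evec (R : realType) (j : 'I_3) : 'rV[R]_3 := delta_mx 0 j.

(* Partial derivative: [Some j] = d/dx_j, [None] = d/dt. *)
Definition pd (R : realType) (d : option 'I_3) (g : sfield R) : sfield R :=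
  fun x t => match d with
  | Some j => derive1 (fun s : R => g (x + s *: evec R j) t) 0
  | None => derive1 (fun s : R => g x s) t
  end.

Definition pdx (R : realType) (j : 'I_3) (g : sfield R) : sfield R := pd (Some j) g.
Definition pdt (R : realType) (g : sfield R) : sfield R := pd None g.

Fixpoint iter_pd (R : realType) (s : seq (option 'I_3)) (g : sfield R) : sfield R :=
  match s with
  | [::] => g
  | d :: s' => pd d (iter_pd s' g)
  end.

Definition section (R : realType) (d : option 'I_3) (g : sfield R) (x : 'rV[R]_3) (t : R)
  : R -> R :=
  match d with
  | Some j => fun s => g (x + s *: evec R j) t
  | None => fun s => g x (t + s)
  end.

Definition smooth (R : realType) (g : sfield R) : Prop :=
  forall s : seq (option 'I_3),
    continuous (fun p : 'rV[R]_3 * R => iter_pd s g p.1 p.2) /\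
    forall (d : option 'I_3) x t, derivable (section d (iter_pd s g) x t) 0 1.

Definition smooth_v (R : realType) (F : vfield R) : Prop := forall i, smooth (F i).

Definition periodic (R : realType) (L : R) (g : sfield R) : Prop :=
  forall j x t, g (x + L *: evec R j) t = g x t.

Definition periodic_v (R : realType) (L : R) (F : vfield R) : Prop :=
  forall i, periodic L (F i).

Definition Gamma (R : realType) (nu : R) (u : vfield R) (g : sfield R) : sfield R :=
  fun x t => pdt g x t + \sum_(j < 3) u j x t * pdx j g x t
             - nu * \sum_(j < 3) pdx j (pdx j g) x t.

Definition Amap (R : realType) (ell : vfield R) : vfield R :=
  fun m x t => x 0 m + ell m x t.

Definition gradA (R : realType) (ell : vfield R) (x : 'rV[R]_3) (t : R) : 'M[R]_3 :=
  \matrix_(m < 3, j < 3) pdx j (Amap ell m) x t.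

Definition Qmat (R : realType) (ell : vfield R) (x : 'rV[R]_3) (t : R) : 'M[R]_3 :=
  invmx (gradA ell x t).

Definition Ccoef (R : realType) (ell : vfield R) (m k i : 'I_3) : sfield R :=
  fun x t => \sum_(j < 3) Qmat ell x t j i * pdx j (pdx k (Amap ell m)) x t.

Definition wfield (R : realType) (ell v : vfield R) : vfield R :=
  fun i x t => \sum_(m < 3) pdx i (Amap ell m) x t * v m x t.

From HB Require Import structures.
From mathcomp Require Import all_boot all_order all_algebra.
From mathcomp Require Import all_classical all_reals all_analysis.
From mathcomp Require Import ring lra.
Import Order.TTheory GRing.Theory Num.Theory.
Import numFieldNormedType.Exports.
Set Implicit Arguments. Unset Strict Implicit. Unset Printing Implicit Defensive.
Local Open Scope ring_scope.

(* Two calculus rules drive the proof: the Leibniz rule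
   Γ(φψ) = φ Γψ + ψ Γφ - 2ν ∇φ·∇ψ and the commutator ∂_i Γφ = Γ ∂_iφ + (∂_i u_j) ∂_jφ.
   Since Γ x_m = u_m, the equation for ℓ says Γ A = 0, so the commutator gives
   Γ(∂_i A^m) = -(∂_i u_j) ∂_j A^m.  Expanding Γ w_i = Σ_m Γ(∂_i A^m v_m) by Leibniz, the
   term ∂_i A^m Γ v_m contracts against Q = (∇A)^-1 to f_i + 2ν ∂_i∂_k A^m ∂_k v_m, which
   cancels the cross term by the symmetry of second derivatives, and v_m Γ(∂_i A^m) is
   -(∂_i u_j) w_j.  Symmetry of mixed partials comes from the mean value theorem applied
   twice to a second difference. *)

Section MixedPartials.
Variable R : realType.

Lemma MVT_open (f df : R -> R) (h : R) : 0 < h ->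
  (forall z, is_derive z (1 : R) f (df z)) -> exists2 c, 0 < c < h & f h - f 0 = df c * h.
Proof.
move=> h0 fD.
have [c + ->] : exists2 c, c \in `]0, h[ & f h - f 0 = df c * (h - 0).
  apply: MVT h0 (fun z _ => fD z) _.
  by apply: derivable_within_continuous => z _; exact: (@ex_derive _ _ _ _ _ _ _ (fD z)).
by rewrite in_itv subr0; exists c.
Qed.

Lemma second_difference_MVT (F Fa D : R -> R -> R) (h : R) : 0 < h ->
  (forall a b, is_derive a (1 : R) (F^~ b) (Fa a b)) ->
  (forall a b, is_derive b (1 : R) (Fa a) (D a b)) ->
  exists a b, [/\ 0 < a < h, 0 < b < h & F h h - F h 0 - F 0 h + F 0 0 = D a b * h ^+ 2].
Proof.
move=> h0 FaD DD.
have [a ah Ea] := MVT_open (f := fun a => F a h - F a 0) h0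
  (fun a => is_deriveB (FaD a h) (FaD a 0)).
have [b bh Eb] := MVT_open h0 (DD a).
by exists a, b; split => //; rewrite expr2 mulrA -Eb -Ea; ring.
Qed.

Lemma mixed_partials_eq (F F1 F2 D12 D21 : R -> R -> R) :
  (forall a b, is_derive a (1 : R) (F^~ b) (F1 a b)) ->
  (forall a b, is_derive b (1 : R) (F a) (F2 a b)) ->
  (forall a b, is_derive b (1 : R) (F1 a) (D12 a b)) ->
  (forall a b, is_derive a (1 : R) (F2^~ b) (D21 a b)) ->
  {for (0, 0), continuous (fun p : R * R => D12 p.1 p.2)} ->
  {for (0, 0), continuous (fun p : R * R => D21 p.1 p.2)} ->
  D12 0 0 = D21 0 0.
Proof.
move=> F1D F2D D12D D21D /cvgrPdist_lt D12c /cvgrPdist_lt D21c.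
apply/eqP; rewrite -subr_eq0 -normr_le0; apply/ler_addgt0Pr => e e0; rewrite add0r.
have e20 : 0 < e / 2 by rewrite divr_gt0.
have [r /= r0 near0] := (nbhs_ballP _ _).1 (filterI (D12c _ e20) (D21c _ e20)).
have h0 : 0 < r / 2 by rewrite divr_gt0.
have inball a : 0 < a < r / 2 -> ball (0 : R) r a.
  by case/andP=> a0 ar; rewrite /ball /= sub0r normrN gtr0_norm //; lra.
have [a1 [b1 [a1h b1h E1]]] := second_difference_MVT h0 F1D D12D.
have [b2 [a2 [b2h a2h E2]]] := second_difference_MVT (F := fun a b => F b a) h0 (fun a b => F2D b a)
  (fun a b => D21D b a).
have D12E : D12 a1 b1 = D21 a2 b2.
  apply: (mulIf (x := (r / 2) ^+ 2)); first by rewrite expf_neq0 // gt_eqF.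
  by rewrite -E1 -E2 /=; ring.
have [c12 _] := near0 (a1, b1) (conj (inball _ a1h) (inball _ b1h)).
have [_ c21] := near0 (a2, b2) (conj (inball _ a2h) (inball _ b2h)).
have -> : D12 0 0 - D21 0 0 = (D12 0 0 - D12 a1 b1) - (D21 0 0 - D21 a2 b2).
  by rewrite D12E; ring.
rewrite (le_trans (ler_normB _ _)) //; rewrite /= in c12 c21; lra.
Qed.

End MixedPartials.

Section PartialDerivatives.
Variable R : realType.
Implicit Types (g h : sfield R) (d : option 'I_3) (x : 'rV[R]_3) (t : R).

Definition dir_x d : 'rV[R]_3 := if d is Some j then evec R j else 0.
Definition dir_t d : R := if d is None then 1 else 0.

Lemma sectionE d g x t :
  section d g x t = fun s => g (x + s *: dir_x d) (t + s * dir_t d).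
Proof. by case: d => [j|]; apply: funext => s /=; rewrite ?mulr0 ?mulr1 ?scaler0 ?addr0. Qed.

Lemma derive1_shift (f : R -> R) a : derive1 f a = derive1 (fun s => f (a + s)) 0.
Proof.
by rewrite /derive1; do 2 f_equal; apply: funext => s /=; rewrite !addr0 (addrC s a).
Qed.

Lemma pd_section d g x t : pd d g x t = derive1 (section d g x t) 0.
Proof. by case: d => //=; rewrite derive1_shift. Qed.

Definition pderivable g := forall d x t, derivable (section d g x t) 0 1.

Lemma is_derive_section d g x t a : pderivable g ->
  is_derive a (1 : R) (section d g x t) (pd d g (x + a *: dir_x d) (t + a * dir_t d)).
Proof.
move=> dg.
have shiftE : (fun s => section d g x t (a + s)) =
    section d g (x + a *: dir_x d) (t + a * dir_t d).
  by rewrite !sectionE; apply: funext => s; rewrite scalerDl mulrDl !addrA.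
have /derivableP : derivable (section d g x t) a 1.
  apply/derivable1P; rewrite (_ : (fun z : R => _) = fun s => section d g x t (a + s)); last first.
    by apply: funext => s /=; rewrite [_%:A]mulr1 addrC.
  by rewrite shiftE; exact: dg.
by rewrite -derive1E derive1_shift shiftE -pd_section.
Qed.

Lemma sectionD d g h x t :
  section d (fun x t => g x t + h x t) x t = section d g x t + section d h x t.
Proof. by case: d. Qed.

Lemma sectionB d g h x t :
  section d (fun x t => g x t - h x t) x t = section d g x t - section d h x t.
Proof. by case: d. Qed.

Lemma sectionM d g h x t :
  section d (fun x t => g x t * h x t) x t = section d g x t * section d h x t.
Proof. by case: d. Qed.

Lemma section_cst d (c : R) x t : section d (fun _ _ => c) x t = cst c.
Proof. by case: d. Qed.

Lemma section_sum n d (F : 'I_n -> sfield R) x t :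
  section d (fun x t => \sum_(m < n) F m x t) x t = \sum_(m < n) section d (F m) x t.
Proof. by rewrite fct_sumE; case: d. Qed.

Lemma pderivableD g h : pderivable g -> pderivable h ->
  pderivable (fun x t => g x t + h x t).
Proof. by move=> dg dh d x t; rewrite sectionD; exact: derivableD. Qed.

Lemma pderivableB g h : pderivable g -> pderivable h ->
  pderivable (fun x t => g x t - h x t).
Proof. by move=> dg dh d x t; rewrite sectionB; exact: derivableB. Qed.

Lemma pderivableM g h : pderivable g -> pderivable h ->
  pderivable (fun x t => g x t * h x t).
Proof. by move=> dg dh d x t; rewrite sectionM; exact: derivableM. Qed.

Lemma pderivable_cst (c : R) : pderivable (fun _ _ => c).
Proof. by move=> d x t; rewrite section_cst. Qed.

Lemma pderivable_sum n (F : 'I_n -> sfield R) : (forall m, pderivable (F m)) ->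
  pderivable (fun x t => \sum_(m < n) F m x t).
Proof. by move=> dF d x t; rewrite section_sum; apply: derivable_sum => m; apply: dF. Qed.

Lemma pdD d g h : pderivable g -> pderivable h ->
  pd d (fun x t => g x t + h x t) = fun x t => pd d g x t + pd d h x t.
Proof.
move=> dg dh; apply: funext => x; apply: funext => t.
by rewrite !pd_section !derive1E sectionD; exact: deriveD.
Qed.

Lemma pdB d g h : pderivable g -> pderivable h ->
  pd d (fun x t => g x t - h x t) = fun x t => pd d g x t - pd d h x t.
Proof.
move=> dg dh; apply: funext => x; apply: funext => t.
by rewrite !pd_section !derive1E sectionB; exact: deriveB.
Qed.

Lemma pdM d g h : pderivable g -> pderivable h ->
  pd d (fun x t => g x t * h x t) = fun x t => g x t * pd d h x t + h x t * pd d g x t.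
Proof.
move=> dg dh; apply: funext => x; apply: funext => t.
by rewrite !pd_section !derive1E sectionM deriveM // !sectionE /= scale0r mul0r !addr0.
Qed.

Lemma pd_cst d (c : R) : pd d (fun _ _ => c) = fun _ _ => 0.
Proof.
apply: funext => x; apply: funext => t.
by rewrite pd_section derive1E section_cst; exact: derive_cst.
Qed.

Lemma pdMl d (c : R) g : pderivable g ->
  pd d (fun x t => c * g x t) = fun x t => c * pd d g x t.
Proof.
move=> dg; rewrite pdM; [rewrite pd_cst | exact: pderivable_cst | exact: dg].
by apply: funext => x; apply: funext => t; rewrite mulr0 addr0.
Qed.

Lemma pd_sum n d (F : 'I_n -> sfield R) : (forall m, pderivable (F m)) ->
  pd d (fun x t => \sum_(m < n) F m x t) = fun x t => \sum_(m < n) pd d (F m) x t.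
Proof.
move=> dF; apply: funext => x; apply: funext => t.
rewrite pd_section derive1E section_sum derive_sum => [|m]; last exact: dF.
by apply: eq_bigr => m _; rewrite pd_section derive1E.
Qed.

Lemma pdx_eq0 j g x t : (forall y, g y t = 0) -> pdx j g x t = 0.
Proof.
move=> g0; rewrite /pdx pd_section derive1E.
have -> : section (Some j) g x t = cst 0 by apply: funext => s; exact: g0.
exact: derive_cst.
Qed.

End PartialDerivatives.

Arguments dir_x {R} d.
Arguments dir_t {R} d.

Section Smoothness.
Variable R : realType.
Implicit Types (g h : sfield R) (d : option 'I_3) (x : 'rV[R]_3) (t : R).

Lemma iter_pd_rcons s d g : iter_pd (rcons s d) g = iter_pd s (pd d g).
Proof. by elim: s => //= e s ->. Qed.

Lemma smooth_pd d g : smooth g -> smooth (pd d g).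
Proof. by move=> sg s; rewrite -iter_pd_rcons; apply: sg. Qed.

Lemma smooth_pderivable g : smooth g -> pderivable g.
Proof. by move=> sg; exact: (sg [::]).2. Qed.

Lemma continuous_translate2 x t (v1 v2 : 'rV[R]_3) (c1 c2 : R) :
  continuous (fun p : R * R => (x + p.2 *: v2 + p.1 *: v1, t + p.2 * c2 + p.1 * c1)).
Proof.
have space_cont : continuous (fun p : R * R => x + p.2 *: v2 + p.1 *: v1).
  move=> p; apply: cvgD; [apply: cvgD; [exact: cvg_cst | apply: cvgZl; exact: cvg_snd] |].
  by apply: cvgZl; exact: cvg_fst.
have time_cont : continuous (fun p : R * R => t + p.2 * c2 + p.1 * c1).
  move=> p; apply: cvgD; [apply: cvgD; [exact: cvg_cst | apply: cvgMl; exact: cvg_snd] |].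
  by apply: cvgMl; exact: cvg_fst.
by move=> p; exact: cvg_pair (space_cont p) (time_cont p).
Qed.

Lemma pdC d1 d2 g : smooth g -> pd d1 (pd d2 g) = pd d2 (pd d1 g).
Proof.
move=> sg; apply: funext => x; apply: funext => t.
pose along (G : sfield R) a b := G (x + b *: dir_x d2 + a *: dir_x d1) (t + b * dir_t d2 + a * dir_t d1).
have along_d1 (G : sfield R) a b : pderivable G ->
    is_derive a (1 : R) (along G ^~ b) (along (pd d1 G) a b).
  by move=> dG; have := @is_derive_section R d1 G (x + b *: dir_x d2) (t + b * dir_t d2) a dG;
    rewrite sectionE.
have along_d2 (G : sfield R) a b : pderivable G ->
    is_derive b (1 : R) (along G a) (along (pd d2 G) a b).
  move=> dG; have := @is_derive_section R d2 G (x + a *: dir_x d1) (t + a * dir_t d1) b dG.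
  by rewrite sectionE /along (addrAC x) (addrAC t); under eq_fun do rewrite (addrAC x) (addrAC t).
have along_cont s : {for (0, 0), continuous (fun p : R * R => along (iter_pd s g) p.1 p.2)}.
  have translate_cont :=
    @continuous_translate2 x t (dir_x d1) (dir_x d2) (dir_t d1) (dir_t d2).
  by have := continuous_comp (translate_cont (0, 0)) ((sg s).1 _).
have dg := smooth_pderivable sg.
have := @mixed_partials_eq R (along g) (along (pd d1 g)) (along (pd d2 g))
  (along (pd d2 (pd d1 g))) (along (pd d1 (pd d2 g))) (fun a b => along_d1 g a b dg)
  (fun a b => along_d2 g a b dg)
  (fun a b => along_d2 _ a b (smooth_pderivable (smooth_pd d1 sg)))
  (fun a b => along_d1 _ a b (smooth_pderivable (smooth_pd d2 sg)))
  (along_cont [:: d2; d1]) (along_cont [:: d1; d2]).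
by rewrite /along !scale0r !mul0r !addr0.
Qed.

Lemma smoothD g h : smooth g -> smooth h -> smooth (fun x t => g x t + h x t).
Proof.
move=> sg sh.
have iter_pdD s : iter_pd s (fun x t => g x t + h x t) =
    fun x t => iter_pd s g x t + iter_pd s h x t.
  by elim: s => //= d s ->; rewrite pdD //; [exact: (sg s).2 | exact: (sh s).2].
move=> s; rewrite iter_pdD; split; last exact: pderivableD (sg s).2 (sh s).2.
by move=> p; exact: (continuousD ((sg s).1 p) ((sh s).1 p)).
Qed.

Lemma iter_pd_cst s (c : R) :
  iter_pd s (fun _ _ => c) = fun _ _ => if s is [::] then c else 0.
Proof. by elim: s => //= d s ->; rewrite pd_cst. Qed.

Lemma smooth_cst (c : R) : smooth (fun _ _ => c).
Proof. by move=> s; rewrite iter_pd_cst; split; [exact: cst_continuous | exact: pderivable_cst]. Qed.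

Lemma section_coord d m x t :
  section d (fun y (_ : R) => y 0 m) x t = cst (x 0 m) + dir_x d 0 m *: id.
Proof. by rewrite sectionE; apply: funext => s; rewrite /= !mxE mulrC. Qed.

Lemma pd_coord d m : pd d (fun x (_ : R) => x 0 m) = fun _ _ => dir_x d 0 m.
Proof.
apply: funext => x; apply: funext => t; rewrite pd_section derive1E section_coord.
by rewrite deriveD // derive_cst deriveZ // derive_id add0r [_ *: 1]mulr1.
Qed.

Lemma smooth_coord m : smooth (fun x (_ : R) => x 0 m).
Proof.
case/lastP => [|s d]; last by rewrite iter_pd_rcons pd_coord; exact: smooth_cst.
split => [p | d x t]; rewrite /=.
  have fst_cont : {for p, continuous (fst : 'rV[R]_3 * R -> 'rV[R]_3)} by exact: cvg_fst.
  by have := continuous_comp fst_cont (@coord_continuous R _ _ 0 m p.1).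
rewrite section_coord; apply: derivableD; first exact: derivable_cst.
by apply: derivableZ; exact: derivable_id.
Qed.

Lemma smooth_Amap (ell : vfield R) m : smooth (ell m) -> smooth (Amap ell m).
Proof. exact: smoothD (smooth_coord m). Qed.

End Smoothness.

Section GammaJet.
Variables (R : comRingType) (n : nat) (nu : R).
Implicit Types (U A B AA BB : 'I_n -> R).

(* The
   identities for Γ are reduced to identities on jets, applied with explicit arguments:
   letting unification or [ring] look inside [pd] makes it unfold the limits defining
   derivatives, which is prohibitively slow. *)
Definition Gamma_jet (dt : R) U A AA : R :=
  dt + \sum_(j < n) U j * A j - nu * \sum_(j < n) AA j.

Lemma Gamma_jetM (a b ta tb : R) U A B AA BB :
  Gamma_jet (a * tb + b * ta) U (fun j => a * B j + b * A j)
       (fun j => a * BB j + B j * A j + (b * AA j + A j * B j)) =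
  a * Gamma_jet tb U B BB + b * Gamma_jet ta U A AA - 2 * nu * \sum_(j < n) A j * B j.
Proof.
have sU : \sum_(j < n) U j * (a * B j + b * A j) =
    a * \sum_(j < n) U j * B j + b * \sum_(j < n) U j * A j.
  by rewrite !mulr_sumr -big_split; apply: eq_bigr => j _ /=; ring.
have sD : \sum_(j < n) (a * BB j + B j * A j + (b * AA j + A j * B j)) =
    a * \sum_(j < n) BB j + 2 * \sum_(j < n) A j * B j + b * \sum_(j < n) AA j.
  by rewrite !mulr_sumr -!big_split; apply: eq_bigr => j _ /=; ring.
by rewrite /Gamma_jet sU sD; ring.
Qed.

Lemma Gamma_jetD (a b : R) U A B AA BB :
  Gamma_jet (a + b) U (fun j => A j + B j) (fun j => AA j + BB j) =
  Gamma_jet a U A AA + Gamma_jet b U B BB.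
Proof.
have sU : \sum_(j < n) U j * (A j + B j) = \sum_(j < n) U j * A j + \sum_(j < n) U j * B j.
  by rewrite -big_split; apply: eq_bigr => j _ /=; exact: mulrDr.
by rewrite /Gamma_jet sU big_split /=; ring.
Qed.

Lemma Gamma_jet_drift (dt : R) U V A D AA :
  Gamma_jet dt U A AA + \sum_(j < n) V j * D j =
  dt + \sum_(j < n) (U j * A j + D j * V j) - nu * \sum_(j < n) AA j.
Proof.
have DV : \sum_(j < n) D j * V j = \sum_(j < n) V j * D j.
  by apply: eq_bigr => j _; exact: mulrC.
by rewrite /Gamma_jet big_split /= DV; ring.
Qed.

End GammaJet.

Ltac pderivable_tac :=
  repeat match goal with
  | |- pderivable (fun x t => ?F x t) => progress change (pderivable F)
  | |- pderivable (fun x t => @?A x t + @?B x t) => apply: pderivableD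
  | |- pderivable (fun x t => @?A x t - @?B x t) => apply: pderivableB
  | |- pderivable (fun x t => @?A x t * @?B x t) => apply: pderivableM
  | |- pderivable (fun x t => \sum_(m < _) @?A m x t) => apply: pderivable_sum => ?
  | |- pderivable (fun _ _ => _) => apply: pderivable_cst
  | |- pderivable _ => apply: smooth_pderivable
  | |- smooth (pd _ _) => apply: smooth_pd
  | |- smooth (pdx _ _) => apply: smooth_pd
  | |- smooth (pdt _) => apply: smooth_pd
  | H : smooth ?g |- smooth ?g => exact: H
  | H : forall j, smooth (?f j) |- smooth (?f _) => apply: H
  end.

Section Gamma.
Variables (R : realType) (nu : R) (u : vfield R).
Implicit Types (f g : sfield R).

Lemma Gamma_sum n (F : 'I_n -> sfield R) :
  (forall m, pderivable (F m)) -> (forall m k, pderivable (pdx k (F m))) ->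
  Gamma nu u (fun x t => \sum_(m < n) F m x t) = fun x t => \sum_(m < n) Gamma nu u (F m) x t.
Proof.
move=> dF dFk; apply: funext => x; apply: funext => t.
have d1F j : pdx j (fun x t => \sum_(m < n) F m x t) =
    fun x t => \sum_(m < n) pdx j (F m) x t by exact: pd_sum.
have d2F j : pdx j (pdx j (fun x t => \sum_(m < n) F m x t)) =
    fun x t => \sum_(m < n) pdx j (pdx j (F m)) x t.
  by rewrite d1F; apply: pd_sum => m; exact: dFk.
rewrite /Gamma /pdt pd_sum //.
under [X in _ + X - _]eq_bigr do rewrite d1F.
under [X in _ - nu * X]eq_bigr do rewrite d2F.
rewrite sumrB big_split /= -mulr_sumr; congr (_ + _ - nu * _); last exact: exchange_big.
by rewrite exchange_big; apply: eq_bigr => j _; rewrite mulr_sumr.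
Qed.

Lemma Gamma_mul f g : smooth f -> smooth g ->
  Gamma nu u (fun x t => f x t * g x t) = fun x t =>
    f x t * Gamma nu u g x t + g x t * Gamma nu u f x t
    - 2 * nu * \sum_(k < 3) pdx k f x t * pdx k g x t.
Proof.
move=> sf sg; apply: funext => x; apply: funext => t.
have d1fg j : pdx j (fun x t => f x t * g x t) =
    fun x t => f x t * pdx j g x t + g x t * pdx j f x t by apply: pdM; pderivable_tac.
have d2fg j : pdx j (pdx j (fun x t => f x t * g x t)) x t =
    f x t * pdx j (pdx j g) x t + pdx j g x t * pdx j f x t
    + (g x t * pdx j (pdx j f) x t + pdx j f x t * pdx j g x t).
  rewrite d1fg /pdx pdD; [|pderivable_tac ..].
  rewrite (pdM _ (g := f)); [|pderivable_tac ..].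
  by rewrite (pdM _ (g := g)); [|pderivable_tac ..].
rewrite /Gamma /pdt pdM; [|pderivable_tac ..].
under [X in _ + X - _]eq_bigr do rewrite d1fg.
under [X in _ - nu * X]eq_bigr do rewrite d2fg.
exact: (Gamma_jetM nu (f x t) (g x t) (pdt f x t) (pdt g x t) (fun j => u j x t)
  (fun j => pdx j f x t) (fun j => pdx j g x t)
  (fun j => pdx j (pdx j f) x t) (fun j => pdx j (pdx j g) x t)).
Qed.

Lemma pdx_Gamma g i : smooth g -> (forall j, smooth (u j)) ->
  forall x t, pdx i (Gamma nu u g) x t =
    Gamma nu u (pdx i g) x t + \sum_(j < 3) pdx i (u j) x t * pdx j g x t.
Proof.
move=> sg su x t.
have d_drift j : pd (Some i) (fun x t => u j x t * pd (Some j) g x t) x t =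
    u j x t * pdx j (pdx i g) x t + pdx j g x t * pdx i (u j) x t.
  by rewrite pdM ?(pdC (Some i) (Some j) sg); pderivable_tac.
have d_diff j : pd (Some i) (pd (Some j) (pd (Some j) g)) x t =
    pdx j (pdx j (pdx i g)) x t.
  rewrite (pdC (Some i)); last pderivable_tac.
  by rewrite (pdC (Some i) (Some j) sg).
rewrite {1}/Gamma /pdx pdB; [|pderivable_tac ..].
rewrite pdD; [|pderivable_tac ..].
rewrite pdMl; [|pderivable_tac ..].
rewrite !pd_sum => [|j|j]; [|pderivable_tac ..].
under [X in _ + X - _]eq_bigr do rewrite d_drift.
under [X in _ - nu * X]eq_bigr do rewrite d_diff.
rewrite (pdC (Some i) None sg); apply/esym.
exact: (Gamma_jet_drift nu (pdt (pdx i g) x t) (fun j => u j x t) (fun j => pdx i (u j) x t)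
  (fun j => pdx j (pdx i g) x t) (fun j => pdx j g x t) (fun j => pdx j (pdx j (pdx i g)) x t)).
Qed.

Lemma Gamma_add g h : smooth g -> smooth h ->
  Gamma nu u (fun x t => g x t + h x t) = fun x t => Gamma nu u g x t + Gamma nu u h x t.
Proof.
move=> sg sh; apply: funext => x; apply: funext => t.
have d1 j : pdx j (fun x t => g x t + h x t) = fun x t => pdx j g x t + pdx j h x t.
  by apply: pdD; pderivable_tac.
have d2 j : pdx j (pdx j (fun x t => g x t + h x t)) x t =
    pdx j (pdx j g) x t + pdx j (pdx j h) x t.
  by rewrite d1 /pdx pdD; pderivable_tac.
rewrite /Gamma /pdt pdD; [|pderivable_tac ..].
under [X in _ + X - _]eq_bigr do rewrite d1.
under [X in _ - nu * X]eq_bigr do rewrite d2.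
exact: (Gamma_jetD nu (pdt g x t) (pdt h x t) (fun j => u j x t)
  (fun j => pdx j g x t) (fun j => pdx j h x t)
  (fun j => pdx j (pdx j g) x t) (fun j => pdx j (pdx j h) x t)).
Qed.

Lemma Gamma_coord m : Gamma nu u (fun x (_ : R) => x 0 m) = u m.
Proof.
apply: funext => x; apply: funext => t.
rewrite /Gamma /pdt /pdx pd_coord.
under eq_bigr do rewrite pd_coord.
under [X in _ - nu * X]eq_bigr do rewrite pd_coord pd_cst.
rewrite big1_eq mulr0 subr0 /= mxE add0r (bigD1 m) //= big1 => [|j /negPf jm].
  by rewrite mxE !eqxx mulr1 addr0.
by rewrite /evec mxE eq_sym jm andbF mulr0.
Qed.

End Gamma.

Section ContractionAlgebra.
Variables (F : comRingType) (n : nat).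

Lemma contract_left_inverse (G : 'I_n -> 'I_n -> F) (Q : 'M[F]_n) (y : 'I_n -> F) i :
  Q *m \matrix_(m, j) G m j = 1%:M ->
  \sum_(m < n) G m i * \sum_(j < n) Q j m * y j = y i.
Proof.
move=> QG.
have -> : \sum_(m < n) G m i * \sum_(j < n) Q j m * y j =
    \sum_(j < n) (Q *m \matrix_(m, j) G m j) j i * y j.
  under eq_bigr do rewrite mulr_sumr.
  rewrite exchange_big; apply: eq_bigr => j _; rewrite mxE mulr_suml.
  by apply: eq_bigr => m _; rewrite mxE mulrCA mulrA.
rewrite QG (bigD1 i) //= mxE eqxx mul1r big1 ?addr0 // => j /negPf ji.
by rewrite mxE ji mul0r.
Qed.

(* Read G m j = ∂_j A^m, Q = (∇A)^-1, H j k m = ∂_j∂_k A^m, D m k = ∂_k v_m,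
   du j = ∂_i u_j and c = 2ν. *)
Lemma Gamma_wfield_algebra (G : 'I_n -> 'I_n -> F) (Q : 'M[F]_n)
    (H : 'I_n -> 'I_n -> 'I_n -> F) (D : 'I_n -> 'I_n -> F) (v f du : 'I_n -> F) c i :
  Q *m \matrix_(m, j) G m j = 1%:M ->
  \sum_(p < n) (G p i * (c * (\sum_(m < n) \sum_(k < n) (\sum_(j < n) Q j p * H j k m) * D m k)
                         + \sum_(j < n) Q j p * f j)
                + v p * - (\sum_(j < n) du j * G p j)
                - c * \sum_(k < n) H i k p * D p k)
  + \sum_(j < n) du j * \sum_(p < n) G p j * v p = f i.
Proof.
move=> QG.
pose S j := \sum_(m < n) \sum_(k < n) H j k m * D m k.
have source p : c * (\sum_(m < n) \sum_(k < n) (\sum_(j < n) Q j p * H j k m) * D m k)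
    + \sum_(j < n) Q j p * f j = \sum_(j < n) Q j p * (c * S j + f j).
  have -> : \sum_(m < n) \sum_(k < n) (\sum_(j < n) Q j p * H j k m) * D m k =
      \sum_(j < n) Q j p * S j.
    transitivity (\sum_(j < n) \sum_(m < n) \sum_(k < n) Q j p * H j k m * D m k); last first.
      apply: eq_bigr => j _; rewrite /S mulr_sumr; apply: eq_bigr => m _.
      by rewrite mulr_sumr; apply: eq_bigr => k _; rewrite mulrA.
    rewrite [RHS]exchange_big; apply: eq_bigr => m _.
    by rewrite [RHS]exchange_big; apply: eq_bigr => k _; rewrite mulr_suml.
  rewrite mulr_sumr -big_split; apply: eq_bigr => j _ /=; ring.
have transport : \sum_(j < n) du j * \sum_(p < n) G p j * v p =
    \sum_(p < n) v p * \sum_(j < n) du j * G p j.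
  under eq_bigr do rewrite mulr_sumr.
  rewrite exchange_big; apply: eq_bigr => p _; rewrite mulr_sumr.
  by apply: eq_bigr => j _; ring.
rewrite sumrB big_split /= transport.
under eq_bigr do rewrite source.
rewrite (contract_left_inverse (fun j => c * S j + f j) i QG) -mulr_sumr /S.
under [X in _ + X - _]eq_bigr do rewrite mulrN.
by rewrite sumrN; ring.
Qed.

End ContractionAlgebra.

Section LabelTransport.
Variables (R : realType) (nu t : R) (u f ell v : vfield R).
Hypotheses (su : smooth_v u) (sl : smooth_v ell) (sv : smooth_v v).
Hypothesis ell_eq : forall m y, Gamma nu u (ell m) y t + u m y t = 0.
Hypothesis gradA_unit : forall y, gradA ell y t \in unitmx.
Hypothesis v_eq : forall p y, Gamma nu u (v p) y t =
  2 * nu * (\sum_(m < 3) \sum_(k < 3) Ccoef ell m k p y t * pdx k (v m) y t)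
  + \sum_(j < 3) Qmat ell y t j p * f j y t.

Let sA m : smooth (Amap ell m) := smooth_Amap (sl m).

Lemma Gamma_Amap m y : Gamma nu u (Amap ell m) y t = 0.
Proof.
rewrite /Amap Gamma_add; [|exact: smooth_coord | exact: sl].
by rewrite Gamma_coord addrC ell_eq.
Qed.

Lemma Gamma_gradA m i y : Gamma nu u (pdx i (Amap ell m)) y t =
  - \sum_(j < 3) pdx i (u j) y t * pdx j (Amap ell m) y t.
Proof.
apply/eqP; rewrite -addr_eq0; apply/eqP.
rewrite -(pdx_Gamma nu i (sA m) su); apply: pdx_eq0 => z; exact: Gamma_Amap.
Qed.

Lemma Gamma_wfield i x : Gamma nu u (wfield ell v i) x t
  + \sum_(j < 3) pdx i (u j) x t * wfield ell v j x t = f i x t.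
Proof.
have dF m : pderivable (fun x t => pdx i (Amap ell m) x t * v m x t) by pderivable_tac.
have dFk m k : pderivable (pdx k (fun x t => pdx i (Amap ell m) x t * v m x t)).
  by rewrite /pdx pdM; pderivable_tac.
rewrite /wfield (Gamma_sum nu u dF dFk).
have sdA m : smooth (pdx i (Amap ell m)) by apply: smooth_pd.
have dAC m k : pdx k (pdx i (Amap ell m)) x t = pdx i (pdx k (Amap ell m)) x t.
  by rewrite /pdx (pdC _ _ (sA m)).
under eq_bigr => m _.
  rewrite (Gamma_mul nu u (sdA m) (sv m)) v_eq Gamma_gradA.
  under [X in _ - 2 * nu * X]eq_bigr => k _ do rewrite dAC.
  over.
exact: (@Gamma_wfield_algebra R 3 (fun m j => pdx j (Amap ell m) x t) (Qmat ell x t)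
  (fun j k p => pdx j (pdx k (Amap ell p)) x t) (fun m k => pdx k (v m) x t)
  (fun p => v p x t) (fun j => f j x t) (fun j => pdx i (u j) x t) (2 * nu) i
  (mulVmx (gradA_unit x))).
Qed.

End LabelTransport.

Theorem proposition3 (R : realType) (nu L T : R) (u f ell v : vfield R) :
  0 < nu -> 0 < L -> 0 < T ->
  smooth_v u -> smooth_v f -> smooth_v ell -> smooth_v v ->
  periodic_v L u -> periodic_v L f -> periodic_v L ell -> periodic_v L v ->
  (forall i x t, 0 <= t <= T -> Gamma nu u (ell i) x t + u i x t = 0) ->
  (forall x t, 0 <= t <= T -> gradA ell x t \in unitmx) ->
  (forall i x t, 0 <= t <= T ->
     Gamma nu u (v i) x t =
       2 * nu * (\sum_(m < 3) \sum_(k < 3) Ccoef ell m k i x t * pdx k (v m) x t)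
       + \sum_(j < 3) Qmat ell x t j i * f j x t) ->
  forall i x t, 0 <= t <= T ->
    Gamma nu u (wfield ell v i) x t
      + \sum_(j < 3) pdx i (u j) x t * wfield ell v j x t = f i x t.
Proof.
move=> _ _ _ su _ sl sv _ _ _ _ ell_eq gradA_unit v_eq i x t t_in.
exact: (Gamma_wfield su sl sv (fun m y => ell_eq m y t t_in) (fun y => gradA_unit y t t_in)
  (fun p y => v_eq p y t t_in)).
Qed.
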